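(* Let $\mathcal T$ be a tube, let $\phi=\{M_1,\dots,M_n\}$ be a brick set in $\mathcal T$, and let $C=(\dim\mathrm{Ext}^1_{\mathcal T}(M_i,M_j))_{i,j}$ be its adjacency matrix. If $C$ is irreducible, then there is a permutation matrix $P$ such that $P^TCP$ is the $n\times n$ cyclic matrix whose entries are $1$ at positions $(i,i+1)$ for $1\le i\le n-1$ and at $(n,1)$, and $0$ elsewhere (for $n=1$ this is the matrix $(1)$).
   Context: $\Bbbk$ is algebraically closed. A tube (of rank $r\ge1$) is the $\Bbbk$-linear abelian category of finite-dimensional nilpotent representations of the quiver with $r$ vertices forming an oriented cycle (for $r=1$, one vertex with one loop); it is a uniserial hereditary category with Auslander–Reiten translation $\tau$ and Serre duality $\mathrm{Ext}^1(X,Y)\cong D\mathrm{Hom}(Y,\tau X)$. A brick is an object $M$ with $\mathrm{Hom}(M,M)=\Bbbk$; a brick set is a finite set of bricks $\{M_1,\dots,M_n\}$ with $\dim\mathrm{Hom}(M_i,M_j)=\delta_{ij}$. An $n\times n$ matrix $C$ is reducible if either $n\ge2$ and there is a permutation matrix $P$ with $P^TCP=\begin{pmatrix}C_1&C_2\\0&C_3\end{pmatrix}$ with $C_1,C_3$ square of positive size, or $n=1$ and $C=0$; otherwise $C$ is irreducible. *)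

From HB Require Import structures.
From mathcomp Require Import all_boot all_order all_algebra all_fingroup.
Set Implicit Arguments. Unset Strict Implicit. Unset Printing Implicit Defensive.
Import Order.TTheory GRing.Theory Num.Theory.
Local Open Scope ring_scope.

(* Representations of the oriented cycle quiver with r vertices 0 -> 1 -> ... -> r-1 -> 0
   (indices mod r; for r = 1 a single vertex with a loop).  Row-vector convention:
   the arrow i -> i+1 acts by v |-> v *m tmap i. *)
Record qrep (F : fieldType) (r : nat) := QRep {
  tdim : 'I_r -> nat ;
  tmap : forall i : 'I_r, 'M[F]_(tdim i, tdim (ordS i)) }.

Fixpoint pathmx (F : fieldType) (r : nat) (M : qrep F r) (i : 'I_r) (n : nat)
  : 'M[F]_(tdim M i, tdim M (iter n (@ordS r) i)) :=
  match n with
  | 0 => 1%:M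
  | n'.+1 => pathmx M i n' *m tmap M (iter n' (@ordS r) i)
  end.

Definition nilpotent_rep (F : fieldType) (r : nat) (M : qrep F r) : Prop :=
  exists N : nat, forall i : 'I_r, pathmx M i N = 0.

Definition in_tube (F : fieldType) (r : nat) (M : qrep F r) : Prop :=
  (0 < r)%N /\ nilpotent_rep M.

(* entry of a matrix at natural-number indices (0 outside the range) *)
Definition mxent (F : fieldType) (m n : nat) (A : 'M[F]_(m, n)) (a b : nat) : F :=
  match @insub _ (fun x => (x < m)%N) 'I_m a, @insub _ (fun x => (x < n)%N) 'I_n b with
  | Some i, Some j => A i j
  | _, _ => 0
  end.

Section HomExt.
Variables (F : fieldType) (r : nat) (M N : qrep F r).

(* coordinates of  (+)_i Hom_F(M_i, N_i)  *)
Definition vtx_idx := {i : 'I_r & ('I_(tdim M i) * 'I_(tdim N i))%type}.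
(* coordinates of  (+)_{arrows i -> i+1} Hom_F(M_i, N_{i+1})  *)
Definition arr_idx := {i : 'I_r & ('I_(tdim M i) * 'I_(tdim N (ordS i)))%type}.

(* coefficient of f_j[p,q] in  (tmap M i *m f_{i+1} - f_i *m tmap N i)[a,b] *)
Definition ringel_entry (x : vtx_idx) (y : arr_idx) : F :=
  let j := tag x in let p := (tagged x).1 in let q := (tagged x).2 in
  let i := tag y in let a := (tagged y).1 in let b := (tagged y).2 in
  (if (j == ordS i) && (val q == val b) then mxent (tmap M i) a p else 0)
  - (if (j == i) && (val p == val a) then mxent (tmap N i) q b else 0).

(* matrix of Ringel's map  (+)_i Hom(M_i,N_i) -> (+)_a Hom(M_{s a}, N_{t a}),
   (f_i)_i |-> (tmap M i *m f_{i+1} - f_i *m tmap N i)_i, acting on row vectors *)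
Definition ringel_mx : 'M[F]_(#|{: vtx_idx}|, #|{: arr_idx}|) :=
  \matrix_(x, y) ringel_entry (enum_val x) (enum_val y).

(* Hom(M,N) = kernel of Ringel's map, Ext^1(M,N) = its cokernel *)
Definition dimHom : nat := (#|{: vtx_idx}| - \rank ringel_mx)%N.
Definition dimExt1 : nat := (#|{: arr_idx}| - \rank ringel_mx)%N.

End HomExt.

Definition brick_set (F : fieldType) (r n : nat) (M : 'I_n -> qrep F r) : Prop :=
  (forall i, in_tube (M i)) /\
  (forall i j, dimHom (M i) (M j) = (i == j) :> nat).

Definition adj_mx (F : fieldType) (r n : nat) (M : 'I_n -> qrep F r) : 'M[int]_n :=
  \matrix_(i, j) (dimExt1 (M i) (M j))%:Z.

(* reducibility as in the paper; the block upper-triangular form P^T C P = [C1 C2; 0 C3]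
   with C1 of size k x k, 0 < k < n, is written out entrywise *)
Definition reducible_mx (n : nat) (C : 'M[int]_n) : Prop :=
  ((1 < n)%N /\ exists P : 'M[int]_n, is_perm_mx P /\
      exists k : nat, (0 < k < n)%N /\
        forall i j : 'I_n, (k <= i)%N -> (j < k)%N -> (P^T *m C *m P) i j = 0)
  \/ (n = 1%N /\ C = 0).

Definition irreducible_mx (n : nat) (C : 'M[int]_n) : Prop := ~ reducible_mx C.

Definition cyclic_mx (n : nat) : 'M[int]_n :=
  \matrix_(i, j) (if val j == ((val i).+1 %% n)%N then 1 else 0).

From HB Require Import structures.
From mathcomp Require Import all_boot all_order all_algebra all_fingroup.
From mathcomp Require Import zify.
Set Implicit Arguments. Unset Strict Implicit. Unset Printing Implicit Defensive.

(* Ringel's exact sequence gives the Euler form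
   dim Hom(M,N) - dim Ext^1(M,N) = sum_v d_v(M) d_v(N) - sum_v d_v(M) d_{v+1}(N).
   Summing it over all pairs of a brick set and writing D for the total dimension
   vector yields  n - sum_{i,j} dim Ext^1(M_i,M_j) = q(D), where
   q(x) = sum_v x_v^2 - sum_v x_v x_{v+1} is positive semidefinite on the cycle;
   hence the adjacency matrix has total sum at most n.  An irreducible matrix of
   naturals has no zero row or column, so this bound forces it to be the matrix of a
   permutation, and irreducibility again forces that permutation to be one n-cycle. *)

Lemma card_vtx_idx (F : fieldType) r (M N : qrep F r) :
  #|{: vtx_idx M N}| = \sum_i tdim M i * tdim N i.
Proof.
rewrite card_tagged sumnE big_map big_enum /=.
by apply: eq_bigr => i _; rewrite card_prod !card_ord.
Qed.

Lemma card_arr_idx (F : fieldType) r (M N : qrep F r) :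
  #|{: arr_idx M N}| = \sum_i tdim M i * tdim N (ordS i).
Proof.
rewrite card_tagged sumnE big_map big_enum /=.
by apply: eq_bigr => i _; rewrite card_prod !card_ord.
Qed.

Lemma dimExt1_euler (F : fieldType) r (M N : qrep F r) :
  dimExt1 M N + \sum_i tdim M i * tdim N i =
  dimHom M N + \sum_i tdim M i * tdim N (ordS i).
Proof.
rewrite /dimExt1 /dimHom -card_vtx_idx -card_arr_idx.
have := rank_leq_row (ringel_mx M N); have := rank_leq_col (ringel_mx M N).
lia.
Qed.

(* 2 x_v x_{v+1} <= x_v^2 + x_{v+1}^2, summed around the cycle. *)
Lemma sum_mul_ordS_le r (x : 'I_r -> nat) :
  \sum_i x i * x (ordS i) <= \sum_i x i * x i.
Proof.
have sum_sq_ordS : \sum_i x (ordS i) * x (ordS i) = \sum_i x i * x i.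
  by rewrite [RHS](reindex_inj (@ordS_inj r)).
rewrite -(leq_pmul2l (isT : 0 < 2)) [X in _ <= X]mul2n -addnn.
rewrite -{2}sum_sq_ordS -big_split big_distrr /=.
apply: leq_sum => i _.
have := (nat_AGM2 (x i) (x (ordS i))).1; rewrite sqrnD !mulnn; lia.
Qed.

Lemma sum_sum_mulE n r (d : 'I_n -> 'I_r -> nat) (g : 'I_r -> 'I_r) :
  \sum_i \sum_j \sum_v d i v * d j (g v) =
  \sum_v (\sum_i d i v) * (\sum_j d j (g v)).
Proof.
rewrite exchange_big /=; under eq_bigr => i _ do rewrite exchange_big /=.
rewrite exchange_big /=; apply: eq_bigr => v _.
by rewrite big_distrl exchange_big /=; apply: eq_bigr => i _; rewrite big_distrr.
Qed.

Lemma brick_set_sum_dimExt1 (F : fieldType) r n (M : 'I_n -> qrep F r) :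
  brick_set M -> \sum_i \sum_j dimExt1 (M i) (M j) <= n.
Proof.
case=> _ dimHom_delta.
pose D v := \sum_i tdim (M i) v.
have sum_dimHom : \sum_i \sum_j dimHom (M i) (M j) = n.
  under eq_bigr => i _ do under eq_bigr => j _ do rewrite dimHom_delta.
  rewrite -[RHS]card_ord -sum1_card; apply: eq_bigr => i _.
  by rewrite (bigD1 i) //= eqxx big1 // => j; rewrite eq_sym => /negbTE ->.
have euler_sum : \sum_i \sum_j dimExt1 (M i) (M j) + \sum_v D v * D v =
                 \sum_i \sum_j dimHom (M i) (M j) + \sum_v D v * D (ordS v).
  rewrite -(sum_sum_mulE (fun i v => tdim (M i) v) id).
  rewrite -(sum_sum_mulE (fun i v => tdim (M i) v) (@ordS r)).
  rewrite -!big_split /=; apply: eq_bigr => i _.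
  by rewrite -!big_split /=; apply: eq_bigr => j _; apply: dimExt1_euler.
rewrite -(leq_add2r (\sum_v D v * D v)) euler_sum sum_dimHom leq_add2l.
exact: sum_mul_ordS_le.
Qed.

Lemma perm_of_uniq n (s : seq 'I_n) : uniq s -> size s = n ->
  exists p : 'S_n, forall i, p i = nth i s i.
Proof.
move=> s_uniq s_size.
have nth_inj : injective (fun i : 'I_n => nth i s i).
  move=> i j /= eq_nth; apply/val_inj/eqP.
  have [lti ltj] : i < size s /\ j < size s by rewrite s_size.
  by rewrite -(nth_uniq i lti ltj s_uniq) eq_nth (set_nth_default i j ltj).
by exists (perm nth_inj) => i; rewrite permE.
Qed.

Lemma perm_mx_conjE n (C : 'M[int]_n) (p : 'S_n) i j :
  ((perm_mx p^-1%g)^T *m C *m perm_mx p^-1%g)%R i j = C (p i) (p j).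
Proof. by rewrite tr_perm_mx invgK -row_permE -col_permE !mxE. Qed.

(* Listing A first, then its complement, puts C into block upper-triangular form. *)
Lemma reducible_mx_of_set n (C : 'M[int]_n) (A : {set 'I_n}) :
  0 < #|A| < n -> (forall i j, i \notin A -> j \in A -> C i j = 0%R) ->
  reducible_mx C.
Proof.
move=> /andP[A_gt0 A_ltn] C0; left; split; first by lia.
set s := enum A ++ enum (~: A).
have s_uniq : uniq s.
  rewrite cat_uniq !enum_uniq /= andbT; apply/hasPn => x.
  by rewrite !mem_enum in_setC.
have card_AC : #|~: A| = n - #|A| by rewrite cardsCs setCK card_ord.
have s_size : size s = n by rewrite size_cat -!cardE card_AC; lia.
have [p p_nth] := perm_of_uniq s_uniq s_size.
exists (perm_mx p^-1%g); split; first by apply/is_perm_mxP; exists p^-1%g.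
exists #|A|; rewrite A_gt0 A_ltn; split => // i j leAi ltjA.
rewrite perm_mx_conjE; apply: C0; rewrite p_nth /s nth_cat -cardE.
  rewrite ltnNge leAi /= -in_setC -mem_enum; apply: mem_nth.
  by rewrite -cardE card_AC; apply: ltn_sub2r A_ltn _.
by rewrite ifT // -mem_enum; apply: mem_nth; rewrite -cardE.
Qed.

Lemma reducible_mx_zero_row n (C : 'M[int]_n) i :
  (forall j, C i j = 0%R) -> reducible_mx C.
Proof.
move=> Ci0; have [n1 | n_neq1] := eqVneq n 1.
  subst n; right; split => //.
  by apply/matrixP => a j; rewrite mxE [a]ord1 [i]ord1 in Ci0 *.
apply: (@reducible_mx_of_set _ _ [set~ i]) => [|a j].
  by rewrite cardsC1 card_ord; have := ltn_ord i; lia.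
by rewrite !inE negbK => /eqP ->.
Qed.

Lemma reducible_mx_zero_col n (C : 'M[int]_n) j :
  (forall i, C i j = 0%R) -> reducible_mx C.
Proof.
move=> Cj0; have [n1 | n_neq1] := eqVneq n 1.
  subst n; right; split => //.
  by apply/matrixP => i b; rewrite mxE [b]ord1 [j]ord1 in Cj0 *.
apply: (@reducible_mx_of_set _ _ [set j]) => [|i b _].
  by rewrite cards1; have := ltn_ord j; lia.
by rewrite inE => /eqP ->.
Qed.

Lemma sum_eq1_of_gt0 n (x : 'I_n -> nat) :
  (forall i, 0 < x i) -> \sum_i x i <= n -> forall i, x i = 1.
Proof.
move=> x_gt0 sum_le i0; apply/eqP; rewrite eqn_leq x_gt0 andbT.
have : \sum_(i | i != i0) 1 <= \sum_(i | i != i0) x i by apply: leq_sum.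
rewrite sum1_card cardC1 card_ord (bigD1 i0) //= in sum_le *.
by have := ltn_ord i0; lia.
Qed.

Lemma sum_eq1_delta n (x : 'I_n -> nat) :
  \sum_i x i = 1 -> exists k, forall j, x j = (k == j).
Proof.
move=> /sum_nat_seq_eq1[k [_ _ x_k x_other]]; exists k => j.
have [<- // | k_neq_j] := eqVneq k j.
by apply: x_other; rewrite 1?eq_sym ?mem_index_enum.
Qed.

Section IrreducibleNatMatrix.

Variables (n : nat) (c : 'I_n -> 'I_n -> nat).
Local Notation C := ((\matrix_(i, j) (c i j)%:Z)%R : 'M[int]_n).
Hypothesis C_irr : irreducible_mx C.

Lemma irreducible_row_sum_gt0 i : 0 < \sum_j c i j.
Proof.
rewrite lt0n sum_nat_eq0; apply: contra_notN C_irr => /forall_inP ci0.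
by apply: (reducible_mx_zero_row (i := i)) => j; rewrite mxE (eqP (ci0 j _)).
Qed.

Lemma irreducible_col_sum_gt0 j : 0 < \sum_i c i j.
Proof.
rewrite lt0n sum_nat_eq0; apply: contra_notN C_irr => /forall_inP cj0.
by apply: (reducible_mx_zero_col (j := j)) => i; rewrite mxE (eqP (cj0 i _)).
Qed.

(* The vertices from which x is reachable span a block of C closed under predecessors. *)
Lemma irreducible_fconnect (f : 'I_n -> 'I_n) :
  (forall i j, c i j = (f i == j)) -> forall x y, fconnect f x y.
Proof.
move=> c_graph y x; apply: contraT => not_yx; case: C_irr.
pose A := [set z | fconnect f z x].
apply: (@reducible_mx_of_set _ _ A) => [|i j].
  have A_gt0 : 0 < #|A| by apply/card_gt0P; exists x; rewrite inE connect0.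
  have A_proper : A \proper setT.
    rewrite properT; apply: contraNneq not_yx => A_T.
    by move: (in_setT y); rewrite -A_T inE.
  by rewrite A_gt0 /=; have := proper_card A_proper; rewrite cardsT card_ord.
rewrite !inE mxE c_graph => not_ix jx; case: eqP => // fi_j.
by case/negP: not_ix; apply: connect_trans jx; rewrite -fi_j fconnect1.
Qed.

Hypothesis sum_c_le : \sum_i \sum_j c i j <= n.

Lemma irreducible_graph_mx :
  exists2 f : 'I_n -> 'I_n, injective f & forall i j, c i j = (f i == j).
Proof.
have row1 := sum_eq1_of_gt0 irreducible_row_sum_gt0 sum_c_le.
have col1 : forall j, \sum_i c i j = 1.
  by apply: sum_eq1_of_gt0 irreducible_col_sum_gt0 _; rewrite exchange_big.
have [f c_graph] := fin_all_exists (fun i => sum_eq1_delta (row1 i)).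
exists f => // i i' fi_fi'; have [] := sum_eq1_delta (col1 (f i)).
move=> k col_delta; have := col_delta i; have := col_delta i'.
by rewrite !c_graph fi_fi' eqxx; case: eqP => // <-; case: eqP.
Qed.

End IrreducibleNatMatrix.

(* Enumerating the single orbit of f from any point conjugates f to i |-> i + 1. *)
Lemma cyclic_perm_conj n (f : 'I_n -> 'I_n) :
  injective f -> (forall x y, fconnect f x y) ->
  exists p : 'S_n, forall i, f (p i) = p (ordS i).
Proof.
move=> f_inj f_conn; have [n0 | n_gt0] := posnP n.
  by exists 1%g => i; have := ltn_ord i; lia.
pose x0 : 'I_n := Ordinal n_gt0.
have order_n : fingraph.order f x0 = n.
  by rewrite -[RHS]card_ord; apply: eq_card => y; rewrite inE f_conn.
have orbit_size : size (fingraph.orbit f x0) = n by rewrite size_orbit.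
have [p p_nth] := perm_of_uniq (orbit_uniq f x0) orbit_size.
have p_iter i : p i = iter i f x0.
  by rewrite p_nth (set_nth_default x0) ?orbit_size // /fingraph.orbit order_n nth_traject.
exists p => i; rewrite !p_iter -iterS /=.
have [lt_in | eq_in] : i.+1 < n \/ i.+1 = n by have := ltn_ord i; lia.
  by rewrite modn_small.
by rewrite eq_in modnn -iterS [X in iter X _ _]eq_in -[X in iter X _ _]order_n iter_order.
Qed.

Lemma irreducible_nat_mx_cyclic n (c : 'I_n -> 'I_n -> nat) :
  \sum_i \sum_j c i j <= n -> irreducible_mx (\matrix_(i, j) (c i j)%:Z)%R ->
  exists P : 'M[int]_n, is_perm_mx P /\
    (P^T *m \matrix_(i, j) (c i j)%:Z *m P)%R = cyclic_mx n.
Proof.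
move=> sum_c_le C_irr.
have [f f_inj c_graph] := irreducible_graph_mx C_irr sum_c_le.
have [p f_p] := cyclic_perm_conj f_inj (irreducible_fconnect C_irr c_graph).
exists (perm_mx p^-1%g); split; first by apply/is_perm_mxP; exists p^-1%g.
apply/matrixP => i j; rewrite perm_mx_conjE !mxE c_graph f_p (inj_eq perm_inj) eq_sym.
by have -> : (j == ordS i) = (val j == (val i).+1 %% n) by []; case: ifP.
Qed.

Theorem lemma5p1 (F : closedFieldType) (r n : nat) (M : 'I_n -> qrep F r) :
  brick_set M -> irreducible_mx (adj_mx M) ->
  exists P : 'M[int]_n, is_perm_mx P /\ (P^T *m adj_mx M *m P)%R = cyclic_mx n.
Proof.
move=> M_brick; exact: irreducible_nat_mx_cyclic (brick_set_sum_dimExt1 M_brick).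
Qed.
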